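(* Let $(\beta_k)_{k\in\mathbb{N}}$ be a sequence of real numbers. The multi-indexed sequence $$\bar F_{n_1,\ldots,n_d}=\prod_{k=1}^d\beta_k^{n_{(d-k+1)}-n_{(d-k)}},\qquad n_1,\ldots,n_d\in\mathbb{N}_0,$$ is a $d$-dimensional discrete survival function for every $d\ge2$ if and only if $(1,\beta_1,\beta_2,\ldots)\in\mathcal{M}_\infty$. In that case it defines, for each $d$, an infinitely extendible exchangeable wide-sense geometric law.
   Context: $\mathbb{N}_0=\{0,1,\ldots\}$; $n_{(0)}:=0\le n_{(1)}\le\cdots\le n_{(d)}$ is the ordered list of $n_1,\ldots,n_d$; $0^0:=1$. A discrete survival function is $\mathbb{P}(\tau_1>n_1,\ldots,\tau_d>n_d)$ for some $\mathbb{N}^d$-valued random vector. $\nabla^jx_k:=\sum_{i=0}^j(-1)^i\binom{j}{i}x_{k+i}$; $\mathcal{M}_\infty:=\{(x_k)_{k\in\mathbb{N}_0}: x_0=1,\ x_1<1,\ \nabla^jx_k\ge0\ \forall j,k\in\mathbb{N}_0\}$. Wide-sense geometric law: for $\tilde p_I\in[0,1]$, $I\subseteq\{1,\ldots,d\}$, $\sum_I\tilde p_I=1$, $\sum_{I\not\ni k}\tilde p_I<1$, run i.i.d. trials with outcome $I$ of probability $\tilde p_I$, $\tilde E_I$ the first trial with outcome $I$, $\tau_k=\min\{\tilde E_I:k\in I\}$. Infinitely extendible: there exists an infinite exchangeable sequence $(\tau_k)_{k\in\mathbb{N}}$ such that $(\tau_1,\ldots,\tau_m)$ is exchangeable wide-sense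 geometric for every $m$ and $(\tau_1,\ldots,\tau_d)$ has the given law. *)

From Stdlib Require Import Bool Reals Arith List Permutation.
Import ListNotations.
Open Scope R_scope.

Definition sumR (l : list R) : R := fold_right Rplus 0 l.
Definition prodR (l : list R) : R := fold_right Rmult 1 l.

Fixpoint prod_upto (m : nat) (f : nat -> R) : R :=
  match m with O => 1 | S m' => prod_upto m' f * f (S m') end.

Fixpoint insert_nat (a : nat) (l : list nat) : list nat :=
  match l with
  | [] => [a]
  | b :: l' => if Nat.leb a b then a :: l else b :: insert_nat a l'
  end.
Fixpoint isort (l : list nat) : list nat :=
  match l with [] => [] | a :: l' => insert_nat a (isort l') end.

(* order statistics: ostat n 0 = 0, ostat n j = j-th smallest of n (j>=1) *)
Definition ostat (n : list nat) (j : nat) : nat :=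
  match j with O => O | S j' => nth j' (isort n) O end.

(* A point (n_1,...,n_d) of N_0^d is a list of length d. *)
(* bar F_{n_1..n_d} = prod_{k=1}^d beta_k ^ (n_(d-k+1) - n_(d-k)); pow 0 0 = 1. *)
Definition Fbar (beta : nat -> R) (n : list nat) : R :=
  let d := length n in
  prod_upto d (fun k => beta k ^ (ostat n (d - k + 1) - ostat n (d - k))).

Fixpoint box (d N : nat) : list (list nat) :=
  match d with
  | O => [[]]
  | S d' => flat_map (fun a => map (cons a) (box d' N)) (seq 1 N)
  end.

Fixpoint all_gt (m n : list nat) : bool :=
  match m, n with
  | [], [] => true
  | a :: m', b :: n' => Nat.ltb b a && all_gt m' n'
  | _, _ => false
  end.

Definition boxsum (d N : nat) (p : list nat -> R) (P : list nat -> bool) : R :=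
  sumR (map p (filter P (box d N))).

(* F (on N_0^d) is P(tau_1>n_1,...,tau_d>n_d) for an N^d-valued random vector
   tau (N = {1,2,...}), described by its probability mass function p on N^d;
   series of nonnegative terms over N^d are the limits of the sums over the
   boxes {1..N}^d. *)
Definition is_discrete_survival (d : nat) (F : list nat -> R) : Prop :=
  exists p : list nat -> R,
    (forall m, 0 <= p m) /\
    Un_cv (fun N => boxsum d N p (fun _ => true)) 1 /\
    (forall n, length n = d ->
       Un_cv (fun N => boxsum d N p (fun m => all_gt m n)) (F n)).

Definition nabla (j : nat) (x : nat -> R) (k : nat) : R :=
  sum_f_R0 (fun i => (-1) ^ i * Binomial.C j i * x (k + i)%nat) j.

Definition M_inf (x : nat -> R) : Prop :=
  x O = 1 /\ x 1%nat < 1 /\ forall j k : nat, 0 <= nabla j x k.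

(* the sequence (1, beta_1, beta_2, ...); beta 0 is unused *)
Definition seq_one_beta (beta : nat -> R) (k : nat) : R :=
  match k with O => 1 | _ => beta k end.

(* a subset o of {1,...,d} is a bool list of length d: nth k o = (k+1 \in o) *)
Fixpoint subsets (d : nat) : list (list bool) :=
  match d with
  | O => [[]]
  | S d' => flat_map (fun b => map (cons b) (subsets d')) [true; false]
  end.

(* all outcome sequences of the first M trials *)
Fixpoint words (d M : nat) : list (list (list bool)) :=
  match M with
  | O => [[]]
  | S M' => flat_map (fun o => map (cons o) (words d M')) (subsets d)
  end.

Definition wsg_params (d : nat) (pt : list bool -> R) : Prop :=
  (forall o, In o (subsets d) -> 0 <= pt o <= 1) /\
  sumR (map pt (subsets d)) = 1 /\
  (forall k, (k < d)%nat ->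
     sumR (map pt (filter (fun o => negb (nth k o false)) (subsets d))) < 1).

(* trial number t (t >= 1) with outcome o is compatible with
   {tau_k > n_k for all k}: if t <= n_k then k \notin o *)
Definition trial_ok (t : nat) (o : list bool) (n : list nat) : bool :=
  forallb (fun k => orb (Nat.ltb (nth k n O) t) (negb (nth k o false)))
          (seq 0 (length n)).

Fixpoint ok_from (t : nat) (w : list (list bool)) (n : list nat) : bool :=
  match w with
  | [] => true
  | o :: w' => trial_ok t o n && ok_from (S t) w' n
  end.

(* P(tau_1>n_1,...,tau_d>n_d) for tau_k = min{E_I : k in o}, computed as the
   probability (under the i.i.d. product law) of the event, which depends only
   on the first max(n) trials *)
Definition wsg_surv (d : nat) (pt : list bool -> R) (n : list nat) : R :=
  sumR (map (fun w => prodR (map pt w))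
            (filter (fun w => ok_from 1 w n) (words d (list_max n)))).

Definition is_wsg (d : nat) (F : list nat -> R) : Prop :=
  exists pt, wsg_params d pt /\
    forall n, length n = d -> F n = wsg_surv d pt n.

Definition exchangeable (d : nat) (F : list nat -> R) : Prop :=
  forall n n', length n = d -> Permutation n n' -> F n = F n'.

(* infinite extendibility, via the consistent family (G m)_m of the
   finite-dimensional survival functions of (tau_1,...,tau_m) *)
Definition inf_ext_exch_wsg (d : nat) (F : list nat -> R) : Prop :=
  exists G : nat -> list nat -> R,
    (forall m, (1 <= m)%nat -> is_wsg m (G m) /\ exchangeable m (G m)) /\
    (forall m n, (1 <= m)%nat -> length n = m -> G (S m) (n ++ [O]) = G m n) /\
    (forall n, length n = d -> G d n = F n).

From Stdlib Require Import Reals Arith List.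
From Stdlib Require Import Permutation Sorted Lia Lra Bool.
Import ListNotations.
Open Scope R_scope.

(* Write b = (1, beta_1, beta_2, ...).  For T >= max n, Fbar(n) is the product over
   t = 1..T of b_{#{k | n_k >= t}}.  This is the survival function of the wide-sense
   geometric law with p_I = nabla^|I| b_(d-|I|): by inclusion-exclusion over subsets, one
   trial avoids a given set of m coordinates with probability b_m, and trials are
   independent.  These p_I are probability weights exactly when b is in M_inf, and b_1 < 1
   makes every coordinate eventually hit, so that the first-hit times have a law on N^d.
   Fbar is symmetric and Fbar(n, 0) = Fbar(n), so the laws for all dimensions form one
   exchangeable family.  Conversely, if Fbar is a survival function, then nabla^j b_k is the
   limit of the masses of {tau = 1 on j coordinates, tau > 1 on k others}, hence >= 0; and
   b_1 = 1 would give Fbar(N, 0) = 1 for every N, so tau_1 could not be finite. *)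

Lemma sumR_app (l1 l2 : list R) : sumR (l1 ++ l2) = sumR l1 + sumR l2.
Proof. induction l1 as [|x l1 IH]; simpl; [ring|]. rewrite IH; ring. Qed.

Lemma prodR_app (l1 l2 : list R) : prodR (l1 ++ l2) = prodR l1 * prodR l2.
Proof. induction l1 as [|x l1 IH]; simpl; [ring|]. rewrite IH; ring. Qed.

Lemma sumR_const {T} c (l : list T) : sumR (map (fun _ => c) l) = INR (length l) * c.
Proof.
  induction l as [|x l IH]; [simpl; ring|].
  cbn [map length sumR fold_right]. fold (sumR (map (fun _ => c) l)).
  rewrite IH, S_INR. ring.
Qed.

Lemma sumR_zero {T} (l : list T) : sumR (map (fun _ => 0) l) = 0.
Proof. rewrite sumR_const. ring. Qed.

Lemma sumR_ext {A} (f g : A -> R) l :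
  (forall x, In x l -> f x = g x) -> sumR (map f l) = sumR (map g l).
Proof. intros H. now rewrite (map_ext_in f g l H). Qed.

Lemma sumR_plus {A} (f g : A -> R) l :
  sumR (map (fun x => f x + g x) l) = sumR (map f l) + sumR (map g l).
Proof. induction l as [|x l IH]; simpl; [ring|]. rewrite IH; ring. Qed.

Lemma sumR_minus {A} (f g : A -> R) l :
  sumR (map (fun x => f x - g x) l) = sumR (map f l) - sumR (map g l).
Proof. induction l as [|x l IH]; simpl; [ring|]. rewrite IH; ring. Qed.

Lemma sumR_scal {A} (f : A -> R) c l : sumR (map (fun x => c * f x) l) = c * sumR (map f l).
Proof. induction l as [|x l IH]; simpl; [ring|]. rewrite IH; ring. Qed.

Lemma sumR_le {A} (f g : A -> R) l :
  (forall x, In x l -> f x <= g x) -> sumR (map f l) <= sumR (map g l).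
Proof.
  induction l as [|x l IH]; simpl; intros H; [lra|].
  apply Rplus_le_compat; auto.
Qed.

Lemma sumR_nonneg {A} (f : A -> R) l : (forall x, In x l -> 0 <= f x) -> 0 <= sumR (map f l).
Proof. intros H. rewrite <- (sumR_zero l). now apply sumR_le. Qed.

Lemma sumR_elem_le {A} (f : A -> R) l x :
  In x l -> (forall y, In y l -> 0 <= f y) -> f x <= sumR (map f l).
Proof.
  induction l as [|y l IH]; simpl; intros Hx H; [tauto|].
  assert (0 <= f y) by auto. assert (0 <= sumR (map f l)) by (apply sumR_nonneg; auto).
  destruct Hx as [<-|Hx]; [lra|]. assert (f x <= sumR (map f l)) by auto. lra.
Qed.

Lemma sumR_filter {A} (f : A -> R) (P : A -> bool) l :
  sumR (map f (filter P l)) = sumR (map (fun x => if P x then f x else 0) l).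
Proof. induction l as [|x l IH]; simpl; auto. destruct (P x); simpl; rewrite IH; ring. Qed.

Lemma sumR_flat_map {A B} (g : B -> R) (F : A -> list B) l :
  sumR (map g (flat_map F l)) = sumR (map (fun x => sumR (map g (F x))) l).
Proof. induction l as [|x l IH]; simpl; auto. rewrite map_app, sumR_app, IH. ring. Qed.

Lemma sumR_swap {A B} (h : A -> B -> R) (l : list A) (l' : list B) :
  sumR (map (fun y => sumR (map (fun x => h x y) l)) l')
  = sumR (map (fun x => sumR (map (fun y => h x y) l')) l).
Proof.
  induction l as [|x l IH]; [exact (sumR_zero l')|].
  rewrite (sumR_ext _ (fun y => h x y + sumR (map (fun x' => h x' y) l))) by reflexivity.
  rewrite sumR_plus, IH. reflexivity.
Qed.

Lemma sumR_indicator_eq {A} (eq_dec : forall x y : A, {x = y} + {x <> y}) (g : A -> R) x l :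
  NoDup l ->
  sumR (map (fun y => if eq_dec y x then g y else 0) l)
  = if in_dec eq_dec x l then g x else 0.
Proof.
  induction 1 as [|y l Hy _ IH]; simpl; [reflexivity|].
  rewrite IH. destruct (eq_dec y x) as [<-|Hne].
  - destruct (in_dec eq_dec y l); [contradiction|]. destruct (in_dec eq_dec y (y :: l)); [ring|].
    exfalso; auto with datatypes.
  - destruct (in_dec eq_dec x l), (in_dec eq_dec x (y :: l)) as [[|]|]; try ring;
      try congruence; exfalso; auto with datatypes.
Qed.

(** * Finite differences and inclusion-exclusion over subsets *)

Lemma binom_diag n : Binomial.C n n = 1.
Proof.
  unfold Binomial.C. rewrite Nat.sub_diag. simpl.
  field. apply not_0_INR, fact_neq_0.
Qed.

Lemma binom_0_r n : Binomial.C n 0 = 1.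
Proof.
  unfold Binomial.C. rewrite Nat.sub_0_r. simpl.
  field. apply not_0_INR, fact_neq_0.
Qed.

Lemma nabla_0 x k : nabla 0 x k = x k.
Proof. unfold nabla. simpl. rewrite Nat.add_0_r, binom_0_r. ring. Qed.

Lemma nabla_succ j x k : nabla (S j) x k = nabla j x k - nabla j x (S k).
Proof.
  unfold nabla. rewrite tech5.
  (* Pascal's rule splits the i-th coefficient C(j+1, i) into C(j, i) + C(j, i-1). *)
  set (D := fun i => match i with
                     | O => 0
                     | S i' => (-1) ^ i * Binomial.C j i' * x (k + i)%nat
                     end).
  rewrite (sum_eq _ (fun i => (-1) ^ i * Binomial.C j i * x (k + i)%nat + D i)).
  2:{ intros [|i] Hi; unfold D.
      - rewrite !binom_0_r. ring.
      - rewrite <- (Binomial.pascal j i) by lia. ring. }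
  rewrite plus_sum.
  destruct j as [|j].
  - simpl. rewrite !binom_diag, !Nat.add_0_r, Nat.add_1_r. ring.
  - rewrite (decomp_sum D) by lia. simpl pred.
    rewrite (tech5 (fun i => (-1) ^ i * Binomial.C (S j) i * x (S k + i)%nat)).
    rewrite (sum_eq (fun i => D (S i))
               (fun i => (-1) ^ i * Binomial.C (S j) i * x (S k + i)%nat * -1)).
    2:{ intros i _. unfold D. rewrite Nat.add_succ_r. simpl. ring. }
    rewrite <- scal_sum. unfold D.
    rewrite Nat.add_succ_r. simpl. rewrite !binom_diag. ring.
Qed.

Definition subset_of (f : nat -> bool) (d : nat) (o : list bool) : bool :=
  forallb (fun k => f k || negb (nth k o false)) (seq 0 d).

Lemma forallb_seq_S (g : nat -> bool) d :
  forallb g (seq 0 (S d)) = g 0%nat && forallb (fun k => g (S k)) (seq 0 d).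
Proof.
  cbn [seq forallb]. f_equal. rewrite <- seq_shift.
  induction (seq 0 d) as [|k l IH]; simpl; congruence.
Qed.

Lemma subset_of_cons f d b o :
  subset_of f (S d) (b :: o) = (f 0%nat || negb b) && subset_of (fun k => f (S k)) d o.
Proof. unfold subset_of. now rewrite forallb_seq_S. Qed.

Lemma length_filter_seq_S (g : nat -> bool) d :
  length (filter g (seq 0 (S d)))
  = ((if g 0%nat then 1 else 0) + length (filter (fun k => g (S k)) (seq 0 d)))%nat.
Proof.
  cbn [seq filter]. rewrite <- seq_shift, filter_map_swap.
  destruct (g 0%nat); simpl; now rewrite length_map.
Qed.

Lemma sumR_subsets_S (g : list bool -> R) d :
  sumR (map g (subsets (S d)))
  = sumR (map (fun o => g (true :: o)) (subsets d))
    + sumR (map (fun o => g (false :: o)) (subsets d)).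
Proof. simpl. now rewrite app_nil_r, map_app, sumR_app, !map_map. Qed.

Notation card_in o := (count_occ bool_dec o true).
Notation card_out o := (count_occ bool_dec o false).

Lemma sum_nabla_subset_of (b : nat -> R) d : forall f a c,
  sumR (map (fun o => if subset_of f d o
                      then nabla (c + card_in o) b (a + card_out o) else 0) (subsets d))
  = nabla c b (a + length (filter (fun k => negb (f k)) (seq 0 d))).
Proof.
  induction d as [|d IH]; intros f a c.
  - simpl. rewrite !Nat.add_0_r. ring.
  - set (K := length (filter (fun k => negb (f (S k))) (seq 0 d))).
    assert (Hin : sumR (map (fun o => if subset_of f (S d) (true :: o)
                                      then nabla (c + card_in (true :: o)) b
                                                 (a + card_out (true :: o))
                                      else 0) (subsets d))
                  = if f 0%nat then nabla (S c) b (a + K) else 0).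
    { destruct (f 0%nat) eqn:Hf0.
      - unfold K. rewrite <- IH. apply sumR_ext. intros o _.
        rewrite subset_of_cons, Hf0. simpl. now rewrite Nat.add_succ_r.
      - rewrite (sumR_ext _ (fun _ => 0)); [apply sumR_zero|].
        intros o _. now rewrite subset_of_cons, Hf0. }
    assert (Hout : sumR (map (fun o => if subset_of f (S d) (false :: o)
                                       then nabla (c + card_in (false :: o)) b
                                                  (a + card_out (false :: o))
                                       else 0) (subsets d))
                   = nabla c b (S a + K)).
    { unfold K. rewrite <- IH. apply sumR_ext. intros o _.
      rewrite subset_of_cons, orb_true_r. simpl. now rewrite Nat.add_succ_r. }
    rewrite sumR_subsets_S, Hin, Hout, length_filter_seq_S. fold K.
    destruct (f 0%nat); simpl.
    + rewrite nabla_succ. ring.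
    + rewrite Nat.add_succ_r. ring.
Qed.

Definition wsg_weight (b : nat -> R) (o : list bool) : R :=
  nabla (card_in o) b (card_out o).

Lemma sumR_wsg_weight_subset_of b d f :
  sumR (map (wsg_weight b) (filter (subset_of f d) (subsets d)))
  = b (length (filter (fun k => negb (f k)) (seq 0 d))).
Proof.
  rewrite sumR_filter. rewrite <- nabla_0.
  exact (sum_nabla_subset_of b d f 0 0).
Qed.

(** * A product formula for [Fbar] *)

Lemma prod_upto_ext m f g :
  (forall k, (1 <= k <= m)%nat -> f k = g k) -> prod_upto m f = prod_upto m g.
Proof.
  induction m as [|m IH]; intros H; simpl; [reflexivity|].
  rewrite IH, H; [reflexivity | lia | intros; apply H; lia].
Qed.

Lemma prod_upto_add m n f :
  prod_upto (m + n) f = prod_upto m f * prod_upto n (fun i => f (m + i)%nat).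
Proof.
  induction n as [|n IH]; simpl; [rewrite Nat.add_0_r; ring|].
  rewrite Nat.add_succ_r. simpl. rewrite IH. ring.
Qed.

Lemma prod_upto_const m c : prod_upto m (fun _ => c) = c ^ m.
Proof. induction m as [|m IH]; simpl; [reflexivity|]. rewrite IH. ring. Qed.

Lemma prod_upto_nonneg m f : (forall k, 0 <= f k) -> 0 <= prod_upto m f.
Proof. intros H. induction m; simpl; [lra|]. now apply Rmult_le_pos. Qed.

Lemma prod_upto_seq m f : prod_upto m f = prodR (map f (seq 1 m)).
Proof.
  induction m as [|m IH]; [reflexivity|].
  cbn [prod_upto]. rewrite seq_S, map_app, prodR_app, <- IH. simpl. ring.
Qed.

Lemma insert_nat_perm a l : Permutation (insert_nat a l) (a :: l).
Proof.
  induction l as [|b l IH]; simpl; [reflexivity|].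
  destruct (Nat.leb a b); [reflexivity|].
  now rewrite IH, perm_swap.
Qed.

Lemma isort_perm l : Permutation (isort l) l.
Proof. induction l as [|a l IH]; simpl; [reflexivity|]. now rewrite insert_nat_perm, IH. Qed.

Lemma insert_nat_sorted a l :
  StronglySorted le l -> StronglySorted le (insert_nat a l).
Proof.
  induction 1 as [|b l Hl IH Hb]; simpl; [repeat constructor|].
  destruct (Nat.leb_spec a b).
  - constructor; [now constructor|].
    constructor; [assumption|]. eapply Forall_impl; [|exact Hb]. simpl; lia.
  - constructor; [assumption|].
    eapply Permutation_Forall; [symmetry; apply insert_nat_perm|].
    constructor; [lia|assumption].
Qed.

Lemma isort_sorted l : StronglySorted le (isort l).
Proof. induction l; simpl; [constructor|]. now apply insert_nat_sorted. Qed.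

Definition card_ge (n : list nat) (t : nat) : nat := length (filter (Nat.leb t) n).

Lemma card_ge_perm n n' t : Permutation n n' -> card_ge n t = card_ge n' t.
Proof.
  unfold card_ge. induction 1; simpl; try lia.
  - destruct (Nat.leb t x); simpl; lia.
  - now destruct (Nat.leb t x), (Nat.leb t y).
Qed.

Lemma card_ge_all s t : Forall (le t) s -> card_ge s t = length s.
Proof.
  intros H. unfold card_ge. rewrite forallb_filter_id; [reflexivity|].
  apply forallb_forall. intros x Hx. apply Nat.leb_le. now apply (proj1 (Forall_forall _ _) H).
Qed.

(* The k-th gap of the sorted list (u :: s), counted from the top, is the
   number of times t at which exactly k entries of s are >= t. *)
Lemma prod_card_ge_sorted (b : nat -> R) (hb0 : b O = 1) s : forall u T,
  StronglySorted le s -> Forall (le u) s -> Forall (fun x => x <= u + T)%nat s ->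
  prod_upto T (fun i => b (card_ge s (u + i))) =
  prod_upto (length s) (fun k => b k ^ (nth (length s - k + 1) (u :: s) O
                                         - nth (length s - k) (u :: s) O)).
Proof.
  induction s as [|a s IH]; intros u T Hs Hu HT.
  - simpl. rewrite (prod_upto_ext T _ (fun _ => 1)) by (intros; exact hb0).
    rewrite prod_upto_const. apply pow1.
  - apply StronglySorted_inv in Hs as [Hs Ha].
    inversion Hu as [|? ? Hua Hus]; inversion HT as [|? ? HaT HsT]; subst.
    replace T with ((a - u) + (u + T - a))%nat by lia.
    rewrite prod_upto_add.
    rewrite (prod_upto_ext (a - u) _ (fun _ => b (length (a :: s)))).
    2:{ intros k Hk. f_equal. apply card_ge_all. constructor; [lia|].
        eapply Forall_impl; [|exact Ha]. simpl; lia. }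
    rewrite (prod_upto_ext (u + T - a) _ (fun i => b (card_ge s (a + i)))).
    2:{ intros k Hk. unfold card_ge. cbn [filter].
        replace (Nat.leb (u + (a - u + k)) a) with false by (symmetry; apply Nat.leb_gt; lia).
        now replace (u + (a - u + k))%nat with (a + k)%nat by lia. }
    rewrite prod_upto_const, (IH a (u + T - a)%nat); auto.
    2:{ eapply Forall_impl; [|exact HsT]. simpl; lia. }
    cbn [length prod_upto]. rewrite Nat.sub_diag. simpl nth at 3 4.
    rewrite Rmult_comm. f_equal.
    apply prod_upto_ext. intros k Hk.
    destruct k as [|k]; [lia|].
    replace (length s - k)%nat with (S (length s - S k)) by lia. reflexivity.
Qed.

Lemma Fbar_as_product beta n T : Forall (fun x => x <= T)%nat n ->
  Fbar beta n = prod_upto T (fun t => seq_one_beta beta (card_ge n t)).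
Proof.
  intros HT. pose proof (isort_perm n) as Hp.
  rewrite (prod_upto_ext T _ (fun i => seq_one_beta beta (card_ge (isort n) (0 + i))))
    by (intros; now rewrite (card_ge_perm _ _ _ Hp)).
  rewrite prod_card_ge_sorted; auto using isort_sorted.
  - unfold Fbar. rewrite (Permutation_length Hp).
    apply prod_upto_ext. intros [|k] Hk; [lia|].
    now destruct (length n - S k + 1)%nat, (length n - S k)%nat.
  - apply Forall_forall. intros; lia.
  - now rewrite Hp.
Qed.

(** * [Fbar] is an exchangeable wide-sense geometric survival function *)

Fixpoint trials_ok (al : nat -> list bool -> bool) (t : nat) (w : list (list bool)) : bool :=
  match w with
  | [] => true
  | o :: w' => al t o && trials_ok al (S t) w'
  end.

Lemma ok_from_trials_ok t w n : ok_from t w n = trials_ok (fun t o => trial_ok t o n) t w.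
Proof. revert t; induction w as [|o w IH]; intros t; simpl; [reflexivity|]. now rewrite IH. Qed.

Lemma sumR_words_trials_ok d (pt : list bool -> R) al M : forall t,
  sumR (map (fun w => prodR (map pt w)) (filter (trials_ok al t) (words d M)))
  = prodR (map (fun s => sumR (map pt (filter (al s) (subsets d)))) (seq t M)).
Proof.
  induction M as [|M IH]; intros t; [simpl; ring|].
  rewrite sumR_filter. cbn [words]. rewrite sumR_flat_map.
  rewrite (sumR_ext _ (fun o => (if al t o then pt o else 0) *
      sumR (map (fun w => prodR (map pt w)) (filter (trials_ok al (S t)) (words d M))))).
  2:{ intros o _. rewrite map_map, sumR_filter. cbn [trials_ok].
      destruct (al t o); simpl.
      - rewrite <- sumR_scal. apply sumR_ext. intros w _.
        destruct (trials_ok al (S t) w); simpl; ring.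
      - rewrite sumR_zero. ring. }
  rewrite IH, (sumR_ext _ (fun o => prodR (map (fun s => sumR (map pt (filter (al s) (subsets d))))
                                             (seq (S t) M)) * (if al t o then pt o else 0)))
    by (intros; ring).
  rewrite sumR_scal, <- sumR_filter. simpl. ring.
Qed.

Lemma count_filter_nth (g : nat -> bool) n :
  length (filter (fun k => g (nth k n O)) (seq 0 (length n))) = length (filter g n).
Proof.
  induction n as [|a n IH]; [reflexivity|].
  cbn [length]. rewrite length_filter_seq_S. simpl nth. rewrite IH.
  simpl. now destruct (g a).
Qed.

Lemma sumR_wsg_weight_trial b n t :
  sumR (map (wsg_weight b) (filter (fun o => trial_ok t o n) (subsets (length n))))
  = b (card_ge n t).
Proof.
  change (fun o => trial_ok t o n)
    with (subset_of (fun k : nat => Nat.ltb (nth k n O) t) (length n)).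
  rewrite sumR_wsg_weight_subset_of. unfold card_ge.
  rewrite <- (count_filter_nth (Nat.leb t) n). do 2 f_equal.
  apply filter_ext. intros k. now rewrite Nat.leb_antisym.
Qed.

Lemma sumR_words_survive b n M :
  sumR (map (fun w => prodR (map (wsg_weight b) w))
            (filter (fun w => ok_from 1 w n) (words (length n) M)))
  = prod_upto M (fun t => b (card_ge n t)).
Proof.
  rewrite (filter_ext _ (trials_ok (fun t o => trial_ok t o n) 1))
    by (intros; apply ok_from_trials_ok).
  rewrite sumR_words_trials_ok, prod_upto_seq. f_equal.
  apply map_ext. intros; apply sumR_wsg_weight_trial.
Qed.

Lemma Fbar_wsg_surv beta n :
  Fbar beta n = wsg_surv (length n) (wsg_weight (seq_one_beta beta)) n.
Proof. unfold wsg_surv. rewrite sumR_words_survive. now apply Fbar_as_product, list_max_le. Qed.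

Lemma sumR_wsg_weight b d : sumR (map (wsg_weight b) (subsets d)) = b O.
Proof.
  rewrite <- (forallb_filter_id (subset_of (fun _ => true) d) (subsets d)).
  - rewrite sumR_wsg_weight_subset_of. simpl. now rewrite filter_false.
  - apply forallb_forall. intros o _. now apply forallb_forall.
Qed.

Lemma length_filter_eqb_seq k d :
  (k < d)%nat -> length (filter (fun k' => Nat.eqb k' k) (seq 0 d)) = 1%nat.
Proof.
  intros Hk. transitivity (count_occ' Nat.eq_dec (seq 0 d) k).
  - unfold count_occ'. f_equal. apply filter_ext. intros k'.
    destruct (Nat.eq_dec k' k), (Nat.eqb_spec k' k); congruence.
  - rewrite count_occ_alt. apply NoDup_count_occ'; [apply seq_NoDup | apply in_seq; lia].
Qed.

Lemma sumR_wsg_weight_avoid b d k : (k < d)%nat ->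
  sumR (map (wsg_weight b) (filter (fun o => negb (nth k o false)) (subsets d))) = b 1%nat.
Proof.
  intros Hk.
  rewrite (filter_ext _ (subset_of (fun k' => negb (Nat.eqb k' k)) d)).
  - rewrite sumR_wsg_weight_subset_of, <- (length_filter_eqb_seq k d Hk). do 2 f_equal.
    apply filter_ext. intros; apply negb_involutive.
  - intros o. unfold subset_of. destruct (nth k o false) eqn:E; symmetry.
    + apply not_true_iff_false. rewrite forallb_forall. intros H.
      specialize (H k (proj2 (in_seq d 0 k) ltac:(lia))).
      now rewrite Nat.eqb_refl, E in H.
    + apply forallb_forall. intros x _.
      destruct (Nat.eqb_spec x k); subst; [now rewrite E | reflexivity].
Qed.

Lemma wsg_params_weight b d : M_inf b -> wsg_params d (wsg_weight b).
Proof.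
  intros [Hb0 [Hb1 Hnabla]].
  assert (Hsum : sumR (map (wsg_weight b) (subsets d)) = 1) by now rewrite sumR_wsg_weight.
  split; [|split; [exact Hsum|]].
  - intros o Ho. split; [apply Hnabla|].
    rewrite <- Hsum. apply sumR_elem_le; [exact Ho|]. intros; apply Hnabla.
  - intros k Hk. now rewrite sumR_wsg_weight_avoid.
Qed.

Lemma is_wsg_Fbar beta d : M_inf (seq_one_beta beta) -> is_wsg d (Fbar beta).
Proof.
  intros HM. exists (wsg_weight (seq_one_beta beta)).
  split; [now apply wsg_params_weight|]. intros n <-. apply Fbar_wsg_surv.
Qed.

Lemma Fbar_perm beta n n' : Permutation n n' -> Fbar beta n = Fbar beta n'.
Proof.
  intros Hp. rewrite !(Fbar_as_product beta _ (list_max n)).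
  - apply prod_upto_ext. intros. now rewrite (card_ge_perm _ _ _ Hp).
  - rewrite <- Hp. now apply list_max_le.
  - now apply list_max_le.
Qed.

Lemma Fbar_app_0 beta n : Fbar beta (n ++ [O]) = Fbar beta n.
Proof.
  assert (HT : Forall (fun x => x <= list_max n)%nat n) by now apply list_max_le.
  rewrite (Fbar_as_product beta n _ HT), (Fbar_as_product beta _ (list_max n)).
  - apply prod_upto_ext. intros [|t] Ht; [lia|].
    unfold card_ge. rewrite filter_app, length_app. simpl. now rewrite Nat.add_0_r.
  - apply Forall_app. split; [exact HT|]. constructor; [lia | constructor].
Qed.

Lemma inf_ext_exch_wsg_Fbar beta d :
  M_inf (seq_one_beta beta) -> inf_ext_exch_wsg d (Fbar beta).
Proof.
  intros HM. exists (fun _ => Fbar beta). split; [|split].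
  - intros m _. split; [now apply is_wsg_Fbar|]. intros n n' _. apply Fbar_perm.
  - intros m n _ _. apply Fbar_app_0.
  - reflexivity.
Qed.

(** * The law of the first-hit times *)

Lemma In_box d N m : In m (box d N) <-> length m = d /\ Forall (fun x => 1 <= x <= N)%nat m.
Proof.
  revert m; induction d as [|d IH]; intros m; simpl.
  - split; [intros [<-|[]]; auto|]. intros [H _]. destruct m; [auto|discriminate].
  - rewrite in_flat_map. split.
    + intros [a [Ha Hm]]. apply in_map_iff in Hm as [m' [<- Hm']].
      apply IH in Hm' as [Hl HF]. apply in_seq in Ha. simpl. split; [lia|]. now constructor; [lia|].
    + intros [Hl HF]. destruct m as [|a m']; [discriminate|]. inversion HF; subst.
      exists a. split; [apply in_seq; lia|]. apply in_map, IH. simpl in Hl. split; auto.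
Qed.

Lemma NoDup_map_cons {A} (a : A) l : NoDup l -> NoDup (map (cons a) l).
Proof. apply NoDup_map_NoDup_ForallPairs. intros x y _ _ H. now injection H. Qed.

Lemma NoDup_box d N : NoDup (box d N).
Proof.
  induction d as [|d IH]; simpl; [repeat constructor; auto|].
  induction (seq_NoDup N 1) as [|a l Ha _ IHl]; simpl; [constructor|].
  apply NoDup_app; auto using NoDup_map_cons.
  intros m Hm Hm'. apply in_map_iff in Hm as [m0 [<- _]].
  apply in_flat_map in Hm' as [a' [Ha' Hm']]. apply in_map_iff in Hm' as [m1 [Hm1 _]].
  injection Hm1 as -> _. contradiction.
Qed.

Lemma sumR_box_mono d N N' (g : list nat -> R) : (N <= N')%nat -> (forall m, 0 <= g m) ->
  sumR (map g (box d N)) <= sumR (map g (box d N')).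
Proof.
  intros HN. replace N' with (N + (N' - N))%nat by lia.
  revert g; induction d as [|d IH]; intros g Hg; simpl; [lra|].
  rewrite !sumR_flat_map, seq_app, map_app, sumR_app.
  apply Rle_trans with (sumR (map (fun a => sumR (map g (map (cons a) (box d (N + (N' - N))))))
                                  (seq 1 N))).
  - apply sumR_le. intros a _. rewrite !map_map. apply IH. intros; apply Hg.
  - assert (0 <= sumR (map (fun a => sumR (map g (map (cons a) (box d (N + (N' - N))))))
                            (seq (1 + N) (N' - N))))
      by (apply sumR_nonneg; intros; apply sumR_nonneg; intros; apply Hg).
    lra.
Qed.

Lemma In_words_length d N w : In w (words d N) -> length w = N.
Proof.
  revert w; induction N as [|N IH]; simpl; intros w Hw.
  - now destruct Hw as [<-|[]].
  - apply in_flat_map in Hw as [o [_ Hw]]. apply in_map_iff in Hw as [w' [<- Hw']].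
    simpl. f_equal. now apply IH.
Qed.

(* The number (from 1) of the first trial of [w] whose outcome contains [k], or [0] if none does. *)
Fixpoint first_hit (k : nat) (w : list (list bool)) : nat :=
  match w with
  | [] => O
  | o :: w' => if nth k o false then 1%nat
               else match first_hit k w' with O => O | S s => S (S s) end
  end.

Definition hit (k : nat) (w : list (list bool)) (i : nat) : bool := nth k (nth i w []) false.

Lemma first_hit_S k w s : first_hit k w = S s <->
  (s < length w)%nat /\ hit k w s = true /\ forall i, (i < s)%nat -> hit k w i = false.
Proof.
  unfold hit. revert s; induction w as [|o w IH]; intros s; simpl.
  - split; [discriminate | lia].
  - destruct (nth k o false) eqn:Ho, s as [|s]; simpl.
    + split; [intros _; split; [lia|split; [exact Ho|lia]] | reflexivity].
    + split; [discriminate|]. intros [_ [_ H]]. specialize (H O ltac:(lia)). simpl in H. congruence.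
    + split; [now destruct (first_hit k w)|]. intros [_ [H _]]. congruence.
    + transitivity (first_hit k w = S s).
      { destruct (first_hit k w); split; intros; congruence. }
      rewrite IH. split.
      * intros [Hs [Hh Hi]]. split; [lia|split; [exact Hh|]].
        intros [|i] Hi'; [exact Ho|]. apply Hi. lia.
      * intros [Hs [Hh Hi]]. split; [lia|split; [exact Hh|]].
        intros i Hi'. apply (Hi (S i)). lia.
Qed.

Lemma first_hit_0 k w :
  first_hit k w = O <-> forall i, (i < length w)%nat -> hit k w i = false.
Proof.
  unfold hit. induction w as [|o w IH]; simpl.
  - split; [intros _ i Hi; lia | reflexivity].
  - destruct (nth k o false) eqn:Ho.
    + split; [discriminate|]. intros H. specialize (H O ltac:(lia)). simpl in H. congruence.
    + transitivity (first_hit k w = O); [destruct (first_hit k w); split; congruence|].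
      rewrite IH. split.
      * intros H [|i] Hi; [exact Ho|]. apply H. lia.
      * intros H i Hi. apply (H (S i)). lia.
Qed.

Lemma first_hit_le k w : (first_hit k w <= length w)%nat.
Proof.
  destruct (first_hit k w) as [|s] eqn:E; [lia|].
  apply first_hit_S in E. lia.
Qed.

Definition first_hit_cond (s t : nat) (x : bool) : bool :=
  if Nat.ltb t s then negb x else if Nat.eqb t s then x else true.

Lemma first_hit_iff_cond k w s : (1 <= s <= length w)%nat ->
  first_hit k w = s <->
  forall i, (i < length w)%nat -> first_hit_cond s (S i) (hit k w i) = true.
Proof.
  intros Hs. destruct s as [|s]; [lia|]. rewrite first_hit_S. unfold first_hit_cond. split.
  - intros [_ [Hh Hi]] i Hi'.
    destruct (Nat.ltb_spec (S i) (S s)); [rewrite Hi by lia; reflexivity|].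
    destruct (Nat.eqb_spec (S i) (S s)); [now replace i with s by lia | reflexivity].
  - intros H. split; [lia|split].
    + specialize (H s ltac:(lia)). now rewrite Nat.ltb_irrefl, Nat.eqb_refl in H.
    + intros i Hi. specialize (H i ltac:(lia)).
      replace (Nat.ltb (S i) (S s)) with true in H by (symmetry; apply Nat.ltb_lt; lia).
      now destruct (hit k w i).
Qed.

Definition hits_at (d : nat) (m : list nat) (t : nat) (o : list bool) : bool :=
  forallb (fun k => first_hit_cond (nth k m O) t (nth k o false)) (seq 0 d).

Definition first_hits (d : nat) (w : list (list bool)) : list nat :=
  map (fun k => first_hit k w) (seq 0 d).

Lemma length_first_hits d w : length (first_hits d w) = d.
Proof. unfold first_hits. now rewrite length_map, length_seq. Qed.

Lemma nth_first_hits d w k : (k < d)%nat -> nth k (first_hits d w) O = first_hit k w.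
Proof.
  intros Hk. unfold first_hits.
  rewrite (nth_indep _ O ((fun k => first_hit k w) O)) by (rewrite length_map, length_seq; lia).
  rewrite (map_nth (fun k => first_hit k w)). now rewrite seq_nth.
Qed.

Lemma trials_ok_index al w : forall t,
  trials_ok al t w = true <-> forall i, (i < length w)%nat -> al (t + i)%nat (nth i w []) = true.
Proof.
  induction w as [|o w IH]; intros t; simpl.
  - split; [intros _ i Hi; lia | reflexivity].
  - rewrite andb_true_iff, IH. split.
    + intros [H1 H2] [|i] Hi; simpl; [now rewrite Nat.add_0_r|].
      rewrite Nat.add_succ_r. apply H2. lia.
    + intros H. split; [rewrite <- (Nat.add_0_r t); apply (H O); lia|].
      intros i Hi. specialize (H (S i) ltac:(lia)). now rewrite Nat.add_succ_r in H.
Qed.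

Lemma trials_ok_hits_at d N m w : In m (box d N) -> In w (words d N) ->
  trials_ok (hits_at d m) 1 w = true <-> first_hits d w = m.
Proof.
  intros Hm Hw. apply In_box in Hm as [Hl HF]. apply In_words_length in Hw.
  assert (Hmk : forall k, (k < d)%nat -> (1 <= nth k m O <= length w)%nat).
  { intros k Hk. rewrite Hw. apply (proj1 (Forall_forall _ _) HF), nth_In. lia. }
  rewrite trials_ok_index. split.
  - intros H. apply nth_ext with O O; [now rewrite length_first_hits|].
    intros k Hk. rewrite length_first_hits in Hk. rewrite nth_first_hits by exact Hk.
    apply first_hit_iff_cond; [now apply Hmk|]. intros i Hi.
    specialize (H i Hi). unfold hits_at in H. rewrite forallb_forall in H.
    apply H, in_seq. lia.
  - intros <- i Hi. unfold hits_at. apply forallb_forall. intros k Hk. apply in_seq in Hk.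
    specialize (Hmk k ltac:(lia)). rewrite nth_first_hits in * by lia.
    now apply (first_hit_iff_cond k w (first_hit k w) Hmk).
Qed.

Lemma all_gt_iff m n : length m = length n ->
  all_gt m n = true <-> forall k, (k < length n)%nat -> (nth k n O < nth k m O)%nat.
Proof.
  revert n; induction m as [|a m IH]; intros [|x n] Hl; simpl in *; try discriminate.
  - split; [intros _ k Hk; lia | reflexivity].
  - rewrite andb_true_iff, Nat.ltb_lt, IH by lia. split.
    + intros [H1 H2] [|k] Hk; [exact H1|]. apply H2. lia.
    + intros H. split; [apply (H O); lia|]. intros k Hk. apply (H (S k)). lia.
Qed.

Lemma first_hit_gt k w s x : first_hit k w = S s ->
  (x < S s)%nat <-> forall i, (i < length w)%nat -> hit k w i = true -> (x < S i)%nat.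
Proof.
  intros Hs. apply first_hit_S in Hs as [Hsw [Hh Hi]]. split.
  - intros Hx i Hiw Hhi. destruct (Nat.lt_ge_cases i s); [|lia].
    rewrite Hi in Hhi by assumption. discriminate.
  - intros H. now apply H.
Qed.

Lemma all_gt_first_hits d N n w : In (first_hits d w) (box d N) -> length n = d ->
  all_gt (first_hits d w) n = ok_from 1 w n.
Proof.
  intros Hbox Hn. apply In_box in Hbox as [_ HF].
  assert (Hpos : forall k, (k < d)%nat -> exists s, first_hit k w = S s).
  { intros k Hk. rewrite <- (nth_first_hits d w k Hk).
    assert (Hk1 : (1 <= nth k (first_hits d w) O)%nat).
    { apply (proj1 (Forall_forall _ _) HF), nth_In. now rewrite length_first_hits. }
    destruct (nth k (first_hits d w) O) as [|s]; [lia|]. now exists s. }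
  apply eq_iff_eq_true. rewrite ok_from_trials_ok, trials_ok_index.
  rewrite all_gt_iff by (now rewrite length_first_hits). split.
  - intros H i Hi. unfold trial_ok. apply forallb_forall. intros k Hk. apply in_seq in Hk.
    destruct (Nat.ltb_spec (nth k n O) (1 + i)); [reflexivity|]. simpl.
    fold (hit k w i). destruct (hit k w i) eqn:Hh; [exfalso|reflexivity].
    destruct (Hpos k) as [s Hs]; [lia|].
    specialize (H k ltac:(lia)). rewrite nth_first_hits, Hs in H by lia.
    apply (proj1 (first_hit_gt k w s _ Hs) H i Hi) in Hh. lia.
  - intros H k Hk. destruct (Hpos k) as [s Hs]; [lia|].
    rewrite nth_first_hits, Hs by lia. apply (first_hit_gt k w s _ Hs). intros i Hi Hh.
    specialize (H i Hi). unfold trial_ok in H. rewrite forallb_forall in H.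
    specialize (H k (proj2 (in_seq (length n) 0 k) ltac:(lia))). fold (hit k w i) in H.
    rewrite Hh, orb_false_r, Nat.ltb_lt in H. lia.
Qed.

Lemma nth_le_list_max m k : (nth k m O <= list_max m)%nat.
Proof.
  destruct (Nat.lt_ge_cases k (length m)).
  - apply (proj1 (Forall_forall _ _) (proj1 (list_max_le m _) (le_n _))), nth_In. assumption.
  - rewrite nth_overflow by assumption. lia.
Qed.

Section FirstHitLaw.

Variable b : nat -> R.
Hypothesis Hb : M_inf b.

Definition word_weight (w : list (list bool)) : R := prodR (map (wsg_weight b) w).

Lemma wsg_weight_nonneg o : 0 <= wsg_weight b o.
Proof. apply Hb. Qed.

Lemma word_weight_nonneg w : 0 <= word_weight w.
Proof.
  induction w as [|o w IH]; unfold word_weight; simpl; [lra|].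
  apply Rmult_le_pos; [apply wsg_weight_nonneg | exact IH].
Qed.

Definition first_hit_pmf (d : nat) (m : list nat) : R :=
  prod_upto (list_max m) (fun t => sumR (map (wsg_weight b) (filter (hits_at d m t) (subsets d)))).

Lemma first_hit_pmf_nonneg d m : 0 <= first_hit_pmf d m.
Proof.
  apply prod_upto_nonneg. intros t. apply sumR_nonneg. intros o _. apply wsg_weight_nonneg.
Qed.

Lemma first_hit_pmf_words d N m : In m (box d N) ->
  first_hit_pmf d m
  = sumR (map (fun w => if trials_ok (hits_at d m) 1 w then word_weight w else 0) (words d N)).
Proof.
  intros Hm. apply In_box in Hm as [Hl HF].
  assert (HN : (list_max m <= N)%nat).
  { apply list_max_le. eapply Forall_impl; [|exact HF]. simpl; lia. }
  rewrite <- sumR_filter. unfold word_weight. rewrite sumR_words_trials_ok, <- prod_upto_seq.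
  replace N with (list_max m + (N - list_max m))%nat by lia.
  rewrite prod_upto_add, (prod_upto_ext (N - list_max m) _ (fun _ => 1)).
  - rewrite prod_upto_const, pow1, Rmult_1_r. reflexivity.
  - intros i Hi. rewrite forallb_filter_id.
    + rewrite sumR_wsg_weight. apply Hb.
    + apply forallb_forall. intros o _. apply forallb_forall. intros k _.
      unfold first_hit_cond. pose proof (nth_le_list_max m k).
      replace (Nat.ltb (list_max m + i) (nth k m O)) with false
        by (symmetry; apply Nat.ltb_ge; lia).
      replace (Nat.eqb (list_max m + i) (nth k m O)) with false
        by (symmetry; apply Nat.eqb_neq; lia).
      reflexivity.
Qed.

Lemma boxsum_first_hit_pmf d N (P : list nat -> bool) :
  boxsum d N (first_hit_pmf d) P
  = sumR (map (fun w => if in_dec (list_eq_dec Nat.eq_dec) (first_hits d w) (box d N)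
                        then (if P (first_hits d w) then word_weight w else 0) else 0)
              (words d N)).
Proof.
  unfold boxsum. rewrite sumR_filter.
  rewrite (sumR_ext _ (fun m => sumR (map (fun w =>
             if list_eq_dec Nat.eq_dec m (first_hits d w)
             then (if P m then word_weight w else 0) else 0) (words d N)))).
  2:{ intros m Hm. rewrite (first_hit_pmf_words d N m Hm). destruct (P m).
      - apply sumR_ext. intros w Hw. pose proof (trials_ok_hits_at d N m w Hm Hw) as Hiff.
        destruct (list_eq_dec Nat.eq_dec m (first_hits d w)) as [E|Hne].
        + now rewrite (proj2 Hiff (eq_sym E)).
        + destruct (trials_ok (hits_at d m) 1 w); [|reflexivity].
          exfalso. apply Hne. symmetry. now apply Hiff.
      - rewrite (sumR_ext _ (fun _ => 0)), sumR_zero; [reflexivity|].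
        intros w _. now destruct (list_eq_dec Nat.eq_dec m (first_hits d w)). }
  rewrite <- sumR_swap. apply sumR_ext. intros w _.
  rewrite (sumR_indicator_eq (list_eq_dec Nat.eq_dec) (fun m => if P m then word_weight w else 0));
    [reflexivity | apply NoDup_box].
Qed.

Lemma never_hit_mass d N k : (k < d)%nat ->
  sumR (map (fun w => if trials_ok (fun _ o => negb (nth k o false)) 1 w then word_weight w else 0)
            (words d N))
  = b 1%nat ^ N.
Proof.
  intros Hk. rewrite <- sumR_filter. unfold word_weight. rewrite sumR_words_trials_ok.
  rewrite (map_ext _ (fun _ => b 1%nat)) by (intros; now apply sumR_wsg_weight_avoid).
  now rewrite <- prod_upto_seq, prod_upto_const.
Qed.

Lemma escape_mass_le d N :
  sumR (map (fun w => if in_dec (list_eq_dec Nat.eq_dec) (first_hits d w) (box d N)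
                      then 0 else word_weight w) (words d N))
  <= INR d * b 1%nat ^ N.
Proof.
  set (never k w := if trials_ok (fun _ o => negb (nth k o false)) 1 w then word_weight w else 0).
  assert (Hnever : forall k w, 0 <= never k w).
  { intros k w. unfold never. destruct (trials_ok _ 1 w); [apply word_weight_nonneg | lra]. }
  apply Rle_trans
    with (sumR (map (fun w => sumR (map (fun k => never k w) (seq 0 d))) (words d N))).
  - apply sumR_le. intros w Hw.
    destruct (in_dec (list_eq_dec Nat.eq_dec) (first_hits d w) (box d N)) as [_|Hout].
    { apply sumR_nonneg. intros; apply Hnever. }
    (* some coordinate is never hit, otherwise all first hits would lie in 1..N *)
    destruct (existsb (fun k => Nat.eqb (first_hit k w) 0) (seq 0 d)) eqn:E.
    + apply existsb_exists in E as [k [Hk Hk0]].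
      pose proof (proj1 (first_hit_0 k w) (proj1 (Nat.eqb_eq _ _) Hk0)) as Hmiss.
      apply Rle_trans with (never k w); [|apply (sumR_elem_le (fun k => never k w)); auto].
      unfold never. replace (trials_ok _ 1 w) with true; [lra|].
      symmetry. apply trials_ok_index. intros i Hi. unfold hit in Hmiss. now rewrite Hmiss.
    + exfalso. apply Hout, In_box. split; [apply length_first_hits|].
      apply Forall_forall. intros x Hx. unfold first_hits in Hx.
      apply in_map_iff in Hx as [k [<- Hk]].
      pose proof (first_hit_le k w) as Hle. rewrite (In_words_length d N w Hw) in Hle.
      enough (first_hit k w <> O) by lia. intros H0.
      rewrite <- not_true_iff_false, existsb_exists in E. apply E.
      exists k. split; [exact Hk | now apply Nat.eqb_eq].
  - rewrite (sumR_swap never), (sumR_ext _ (fun _ => b 1%nat ^ N)).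
    + rewrite sumR_const, length_seq. lra.
    + intros k Hk. apply in_seq in Hk. apply never_hit_mass. lia.
Qed.

Lemma survival_error n N :
  0 <= prod_upto N (fun t => b (card_ge n t))
       - boxsum (length n) N (first_hit_pmf (length n)) (fun m => all_gt m n)
  <= INR (length n) * b 1%nat ^ N.
Proof.
  set (d := length n).
  set (inbox w := in_dec (list_eq_dec Nat.eq_dec) (first_hits d w) (box d N)).
  assert (Herr : prod_upto N (fun t => b (card_ge n t))
                 - boxsum d N (first_hit_pmf d) (fun m => all_gt m n)
                 = sumR (map (fun w => if inbox w then 0
                                       else if ok_from 1 w n then word_weight w else 0)
                             (words d N))).
  { rewrite <- sumR_words_survive, boxsum_first_hit_pmf, sumR_filter, <- sumR_minus.
    apply sumR_ext. intros w _. fold d (word_weight w). unfold inbox.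
    destruct (in_dec _ (first_hits d w) (box d N)) as [Hin|].
    - rewrite (all_gt_first_hits d N n w Hin eq_refl). ring.
    - ring. }
  rewrite Herr. split.
  - apply sumR_nonneg. intros w _.
    destruct (inbox w), (ok_from 1 w n); try lra; apply word_weight_nonneg.
  - eapply Rle_trans; [|apply escape_mass_le]. apply sumR_le. intros w _. fold (inbox w).
    destruct (inbox w), (ok_from 1 w n); try lra; apply word_weight_nonneg.
Qed.

End FirstHitLaw.

Lemma Un_cv_geometric_error (u : nat -> R) l C x N0 : 0 <= x < 1 ->
  (forall N, (N0 <= N)%nat -> Rabs (u N - l) <= C * x ^ N) -> Un_cv u l.
Proof.
  intros Hx H eps Heps.
  assert (HC : 0 <= Rabs C) by apply Rabs_pos.
  destruct (pow_lt_1_zero x ltac:(rewrite Rabs_pos_eq; lra) (eps / (Rabs C + 1)))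
    as [N1 HN1]; [apply Rdiv_lt_0_compat; lra|].
  exists (max N0 N1). intros N HN. unfold R_dist.
  specialize (H N ltac:(lia)). specialize (HN1 N ltac:(lia)).
  rewrite Rabs_pos_eq in HN1 by (apply pow_le; lra).
  assert (Hxn : 0 <= x ^ N) by (apply pow_le; lra).
  assert (HCx : C * x ^ N <= Rabs C * x ^ N)
    by (apply Rmult_le_compat_r; [lra | apply Rle_abs]).
  assert (Hdiv : eps / (Rabs C + 1) * (Rabs C + 1) = eps) by (field; lra).
  nra.
Qed.

Lemma discrete_survival_Fbar beta d :
  M_inf (seq_one_beta beta) -> is_discrete_survival d (Fbar beta).
Proof.
  intros HM. set (b := seq_one_beta beta) in *.
  assert (Hb1 : 0 <= b 1%nat < 1).
  { destruct HM as [_ [Hlt Hnabla]]. pose proof (Hnabla O 1%nat) as H. rewrite nabla_0 in H. lra. }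
  assert (Hcv : forall n, length n = d ->
            Un_cv (fun N => boxsum d N (first_hit_pmf b d) (fun m => all_gt m n)) (Fbar beta n)).
  { intros n <-.
    apply (Un_cv_geometric_error _ _ (INR (length n)) (b 1%nat) (list_max n)); [exact Hb1|].
    intros N HN. rewrite (Fbar_as_product beta n N) by (apply list_max_le; lia). fold b.
    pose proof (survival_error b HM n N) as Herr.
    rewrite Rabs_minus_sym, Rabs_pos_eq; lra. }
  exists (first_hit_pmf b d). split; [intros; now apply first_hit_pmf_nonneg|].
  split; [|exact Hcv].
  assert (Hone : Fbar beta (repeat O d) = 1).
  { rewrite (Fbar_as_product beta _ O); [reflexivity|].
    apply Forall_forall. intros x Hx. apply repeat_spec in Hx. lia. }
  rewrite <- Hone. refine (Un_cv_ext _ _ _ _ (Hcv (repeat O d) (repeat_length _ _))).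
  intros N. unfold boxsum. do 2 f_equal. apply filter_ext_in. intros m Hm.
  apply In_box in Hm as [Hl HF]. apply all_gt_iff; [now rewrite repeat_length|].
  intros k Hk. rewrite repeat_length in Hk. rewrite nth_repeat.
  enough (1 <= nth k m O)%nat by lia.
  apply (proj1 (Forall_forall _ _) HF), nth_In. lia.
Qed.

(** * The converse *)

(* Constraint codes: [x <= 1] asks for [tau > x], and [x = 2] asks for [tau = 1]. *)
Definition constraint_ok (x a : nat) : bool := if Nat.eqb x 2 then Nat.eqb a 1 else Nat.ltb x a.

Fixpoint meets (c m : list nat) : bool :=
  match c, m with
  | [], [] => true
  | x :: c', a :: m' => constraint_ok x a && meets c' m'
  | _, _ => false
  end.

Lemma meets_all_gt c m : Forall (fun x => x <= 1)%nat c -> meets c m = all_gt m c.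
Proof.
  intros Hc. revert m; induction Hc as [|x c Hx _ IH]; intros [|a m]; simpl; try reflexivity.
  rewrite IH. unfold constraint_ok.
  now replace (Nat.eqb x 2) with false by (symmetry; apply Nat.eqb_neq; lia).
Qed.

(* [tau = 1] is [tau > 0] minus [tau > 1]. *)
Lemma meets_split c1 c2 m (v : R) :
  (if meets (c1 ++ 2%nat :: c2) m then v else 0)
  = (if meets (c1 ++ 0%nat :: c2) m then v else 0) - (if meets (c1 ++ 1%nat :: c2) m then v else 0).
Proof.
  revert m; induction c1 as [|x c1 IH]; intros [|a m]; simpl; try ring.
  - unfold constraint_ok. simpl.
    destruct a as [|[|a]]; simpl; [ring | destruct (meets c2 m); ring | ring].
  - rewrite !andb_if. destruct (constraint_ok x a); [apply IH | ring].
Qed.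

Lemma boxsum_meets_split d N p c1 c2 :
  boxsum d N p (meets (c1 ++ 2%nat :: c2))
  = boxsum d N p (meets (c1 ++ 0%nat :: c2)) - boxsum d N p (meets (c1 ++ 1%nat :: c2)).
Proof.
  unfold boxsum. rewrite !sumR_filter, <- sumR_minus.
  apply sumR_ext. intros m _. apply meets_split.
Qed.

Lemma card_ge_1_binary c :
  Forall (fun x => x <= 1)%nat c -> card_ge c 1 = count_occ Nat.eq_dec c 1%nat.
Proof.
  unfold card_ge. induction 1 as [|x c Hx _ IH]; [reflexivity|].
  destruct x as [|[|x]]; simpl; [exact IH | now f_equal | lia].
Qed.

Lemma Un_cv_nonneg u l : (forall n, 0 <= u n) -> Un_cv u l -> 0 <= l.
Proof.
  intros Hu H. destruct (Rle_or_lt 0 l) as [|Hl]; [assumption|].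
  destruct (H (- l)) as [N HN]; [lra|]. specialize (HN N (le_n _)). specialize (Hu N).
  unfold R_dist in HN. rewrite Rabs_pos_eq in HN by lra. lra.
Qed.

Section Converse.

Variables (beta : nat -> R) (d : nat) (p : list nat -> R).
Hypothesis Hsurv : forall n, length n = d ->
  Un_cv (fun N => boxsum d N p (fun m => all_gt m n)) (Fbar beta n).

Lemma boxsum_meets_cv j : forall c,
  length c = d -> Forall (fun x => x <= 2)%nat c -> count_occ Nat.eq_dec c 2%nat = j ->
  Un_cv (fun N => boxsum d N p (meets c))
        (nabla j (seq_one_beta beta) (count_occ Nat.eq_dec c 1%nat)).
Proof.
  induction j as [|j IH]; intros c Hl Hc Hj.
  - assert (Hbin : Forall (fun x => x <= 1)%nat c).
    { apply Forall_forall. intros x Hx.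
      assert (x <> 2%nat) by (intros ->; apply (count_occ_In Nat.eq_dec) in Hx; lia).
      pose proof (proj1 (Forall_forall _ _) Hc x Hx) as Hx2. simpl in Hx2. lia. }
    rewrite nabla_0, <- card_ge_1_binary by exact Hbin.
    replace (seq_one_beta beta (card_ge c 1)) with (Fbar beta c).
    2:{ rewrite (Fbar_as_product beta c 1); [simpl; ring|].
        eapply Forall_impl; [|exact Hbin]. simpl; lia. }
    refine (Un_cv_ext _ _ _ _ (Hsurv c Hl)). intros N.
    unfold boxsum. do 2 f_equal. apply filter_ext. intros m. symmetry. now apply meets_all_gt.
  - assert (Hin : In 2%nat c) by (apply (count_occ_In Nat.eq_dec); lia).
    apply in_split in Hin as [c1 [c2 ->]].
    rewrite count_occ_app in Hj. simpl in Hj.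
    apply Forall_app in Hc as [Hc1 Hc2]. apply Forall_inv_tail in Hc2.
    assert (Hfree := IH (c1 ++ 0%nat :: c2)).
    assert (Hlate := IH (c1 ++ 1%nat :: c2)).
    rewrite !length_app, !count_occ_app in *. simpl in *.
    refine (Un_cv_ext _ _ (fun N => eq_sym (boxsum_meets_split d N p c1 c2)) _ _).
    rewrite nabla_succ, <- Nat.add_succ_r.
    apply CV_minus; [apply Hfree | apply Hlate]; try lia;
      apply Forall_app; split; auto; constructor; auto.
Qed.

End Converse.

Lemma count_occ_repeat_nat x y n :
  count_occ Nat.eq_dec (repeat y n) x = if Nat.eqb y x then n else O.
Proof.
  destruct (Nat.eqb_spec y x); [apply count_occ_repeat_eq | apply count_occ_repeat_neq]; auto.
Qed.

Lemma nabla_nonneg_of_survival beta d j k : (j + k <= d)%nat ->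
  is_discrete_survival d (Fbar beta) -> 0 <= nabla j (seq_one_beta beta) k.
Proof.
  intros Hjk [p [Hp0 [_ Hsurv]]].
  (* k coordinates with [tau > 1], j with [tau = 1], and the rest unconstrained *)
  set (c := repeat 1%nat k ++ repeat 2%nat j ++ repeat O (d - (j + k))).
  assert (Hl : length c = d) by (unfold c; rewrite !length_app, !repeat_length; lia).
  assert (Hc : Forall (fun x => x <= 2)%nat c).
  { apply Forall_forall. intros x Hx. unfold c in Hx. rewrite !in_app_iff in Hx.
    destruct Hx as [Hx|[Hx|Hx]]; apply repeat_spec in Hx; lia. }
  assert (H1 : count_occ Nat.eq_dec c 1%nat = k)
    by (unfold c; rewrite !count_occ_app, !count_occ_repeat_nat; simpl; lia).
  assert (H2 : count_occ Nat.eq_dec c 2%nat = j)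
    by (unfold c; rewrite !count_occ_app, !count_occ_repeat_nat; simpl; lia).
  pose proof (boxsum_meets_cv beta d p Hsurv j c Hl Hc H2) as Hcv. rewrite H1 in Hcv.
  apply (Un_cv_nonneg _ _ (fun N => sumR_nonneg _ _ (fun m _ => Hp0 m)) Hcv).
Qed.

Lemma discrete_survival_2_lt_1 F : is_discrete_survival 2 F -> exists N, F [N; O] < 1.
Proof.
  intros [p [Hp0 [Htot Hsurv]]].
  destruct (Htot (1/4)) as [N HN]; [lra|].
  destruct (Hsurv [N; O] eq_refl (1/4)) as [N2 HN2]; [lra|].
  exists N. set (N' := max N N2).
  pose proof (HN N (le_n _)) as HmassN.
  specialize (HN N' ltac:(lia)). specialize (HN2 N' ltac:(lia)).
  unfold R_dist in *. apply Rabs_def2 in HN, HN2, HmassN.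
  set (rest M := sumR (map (fun m => if all_gt m [N; O] then 0 else p m) (box 2 M))).
  assert (Hsplit : boxsum 2 N' p (fun _ => true)
                   = boxsum 2 N' p (fun m => all_gt m [N; O]) + rest N').
  { unfold boxsum, rest. rewrite !sumR_filter, <- sumR_plus. apply sumR_ext.
    intros m _. destruct (all_gt m [N; O]); ring. }
  assert (Hmono : rest N <= rest N').
  { apply sumR_box_mono; [lia|]. intros m. destruct (all_gt m [N; O]); [lra | apply Hp0]. }
  (* no point of the box {1..N}^2 has first coordinate > N *)
  assert (HrestN : rest N = boxsum 2 N p (fun _ => true)).
  { unfold boxsum, rest. rewrite sumR_filter. apply sumR_ext. intros m Hm.
    apply In_box in Hm as [Hl HF]. destruct m as [|a [|b' [|]]]; try discriminate.
    inversion HF as [|? ? Ha _]. simpl.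
    now replace (Nat.ltb N a) with false by (symmetry; apply Nat.ltb_ge; lia). }
  lra.
Qed.

Lemma Fbar_pair_0 beta N : Fbar beta [N; O] = seq_one_beta beta 1%nat ^ N.
Proof.
  rewrite (Fbar_as_product beta _ N) by (repeat constructor; lia).
  rewrite <- prod_upto_const. apply prod_upto_ext. intros [|t] Ht; [lia|].
  unfold card_ge. cbn [filter].
  replace (Nat.leb (S t) N) with true by (symmetry; apply Nat.leb_le; lia).
  reflexivity.
Qed.

Lemma M_inf_of_survival beta :
  (forall d, (2 <= d)%nat -> is_discrete_survival d (Fbar beta)) -> M_inf (seq_one_beta beta).
Proof.
  intros Hsurv.
  assert (Hnabla : forall j k, 0 <= nabla j (seq_one_beta beta) k).
  { intros j k. apply (nabla_nonneg_of_survival beta (j + k + 2)); [lia | apply Hsurv; lia]. }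
  split; [reflexivity | split; [|exact Hnabla]].
  assert (Hle : seq_one_beta beta 1%nat <= 1).
  { pose proof (Hnabla 1%nat O) as H. rewrite nabla_succ, !nabla_0 in H. simpl in H |- *. lra. }
  destruct (discrete_survival_2_lt_1 _ (Hsurv 2%nat (le_n _))) as [N HN].
  rewrite Fbar_pair_0 in HN.
  destruct (Rle_lt_or_eq_dec _ _ Hle) as [|Heq]; [assumption|].
  rewrite Heq, pow1 in HN. lra.
Qed.

Theorem corollary4p2 (beta : nat -> R) :
  ((forall d : nat, (2 <= d)%nat -> is_discrete_survival d (Fbar beta))
     <-> M_inf (seq_one_beta beta)) /\
  (M_inf (seq_one_beta beta) ->
     forall d : nat, (2 <= d)%nat -> inf_ext_exch_wsg d (Fbar beta)).
Proof.
  split; [split|].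
  - apply M_inf_of_survival.
  - intros HM d _. now apply discrete_survival_Fbar.
  - intros HM d _. now apply inf_ext_exch_wsg_Fbar.
Qed.
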